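(* Suppose the sequence $\{\mathcal{G}[k]\}_{k\ge0}$ satisfies the joint strong-connectivity assumption with parameter $T$. Then for every substate $j\in\{1,\dots,N\}$, under the freshness-index rules, $\tau^{(j)}_i[k]\le 2(N-1)T$ for all $k\ge (N-1)T$ and all $i\in\mathcal{V}$ (in particular these indices are finite by the preceding lemma).
   Context: Graphs. Nodes $\mathcal{V}=\{1,\dots,N\}$. At each time $k\in\mathbb{N}=\{0,1,2,\dots\}$ there is a directed graph $\mathcal{G}[k]=(\mathcal{V},\mathcal{E}[k])$; $(i,j)\in\mathcal{E}[k]$ means node $i$ can send information to node $j$ at time $k$. $\mathcal{N}_i[k]=\{l\neq i:(l,i)\in\mathcal{E}[k]\}$ is the set of neighbors of $i$ at time $k$. The union graph over an interval of times has vertex set $\mathcal{V}$ and edge set the union of the edge sets over that interval. Joint strong-connectivity assumption: there is $T\in\mathbb{N}_+=\{1,2,\dots\}$ such that for every $k\in\mathbb{N}$ the union graph over $[kT,(k+1)T)$ is strongly connected. Freshness indices. For each substate index $j\in\{1,\dots,N\}$ (node $j$ being the source node of substate $j$) and node $i$, node $i$ keeps $\tau^{(j)}_i[k]\in\{\omega\}\cup\mathbb{N}$, where $\omega$ is a special symbol. Initialization: $\tau^{(j)}_j[0]=0$, $\tau^{(j)}_i[0]=\omega$ for $i\neq j$. The source keeps $\tau^{(j)}_j[k]=0$ for all $k$. For $i\neq j$, let $\mathcal{M}^{(j)}_i[k]=\{l\in\mathcal{N}_i[k]:\tau^{(j)}_l[k]\neq\omega\}$. Case 1, $\tau^{(j)}_i[k]=\omega$: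 if $\mathcal{M}^{(j)}_i[k]\neq\emptyset$, let $u$ be any minimizer of $\tau^{(j)}_l[k]$ over $l\in\mathcal{M}^{(j)}_i[k]$ and set $\tau^{(j)}_i[k+1]=\tau^{(j)}_u[k]+1$; otherwise set $\tau^{(j)}_i[k+1]=\omega$. Case 2, $\tau^{(j)}_i[k]\neq\omega$: let $\mathcal{F}^{(j)}_i[k]=\{l\in\mathcal{M}^{(j)}_i[k]:\tau^{(j)}_l[k]<\tau^{(j)}_i[k]\}$; if nonempty, let $u$ be any minimizer of $\tau^{(j)}_l[k]$ over $\mathcal{F}^{(j)}_i[k]$ and set $\tau^{(j)}_i[k+1]=\tau^{(j)}_u[k]+1$; otherwise set $\tau^{(j)}_i[k+1]=\tau^{(j)}_i[k]+1$. *)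

From mathcomp Require Import all_boot.
Set Implicit Arguments. Unset Strict Implicit. Unset Printing Implicit Defensive.

(* Nodes are 'I_N. A time-varying graph is E : nat -> rel 'I_N,
   with E k a b meaning (a,b) is an edge at time k (a can send to b). *)

Definition nbr (N : nat) (E : nat -> rel 'I_N) (k : nat) (i l : 'I_N) : bool :=
  (l != i) && E k l i.

Definition union_graph (N : nat) (E : nat -> rel 'I_N) (a b : nat) : rel 'I_N :=
  fun x y => [exists t : 'I_(b - a), E (a + t) x y].

Definition strongly_connected (N : nat) (e : rel 'I_N) : Prop :=
  forall x y : 'I_N, connect e x y.

Definition jointly_strongly_connected (N : nat) (E : nat -> rel 'I_N) (T : nat) : Prop :=
  0 < T /\ forall k : nat, strongly_connected (union_graph E (k * T) (k.+1 * T)).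

(* Freshness indices: option nat, with None standing for the symbol omega.
   tau k i = tau^{(j)}_i[k]. The update rule (with "any minimizer u") is
   expressed as a relation on the trajectory. *)
Definition fresh_update (N : nat) (E : nat -> rel 'I_N)
    (tau : nat -> 'I_N -> option nat) (k : nat) (i : 'I_N) : Prop :=
  match tau k i with
  | None =>
      ((exists l t, nbr E k i l /\ tau k l = Some t) ->
        exists u tu, [/\ nbr E k i u, tau k u = Some tu,
          (forall l t, nbr E k i l -> tau k l = Some t -> tu <= t)
          & tau k.+1 i = Some tu.+1]) /\
      (~ (exists l t, nbr E k i l /\ tau k l = Some t) -> tau k.+1 i = None)
  | Some ti =>
      ((exists l t, [/\ nbr E k i l, tau k l = Some t & t < ti]) ->
        exists u tu, [/\ nbr E k i u, tau k u = Some tu, tu < ti,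
          (forall l t, nbr E k i l -> tau k l = Some t -> t < ti -> tu <= t)
          & tau k.+1 i = Some tu.+1]) /\
      (~ (exists l t, [/\ nbr E k i l, tau k l = Some t & t < ti]) ->
        tau k.+1 i = Some ti.+1)
  end.

Definition fresh_trajectory (N : nat) (E : nat -> rel 'I_N) (j : 'I_N)
    (tau : nat -> 'I_N -> option nat) : Prop :=
  [/\ tau 0 j = Some 0,
      (forall i, i != j -> tau 0 i = None),
      (forall k, tau k j = Some 0)
    & (forall k i, i != j -> fresh_update E tau k i)].

(* Call node x "fresh since s at time k" when tau k x = Some t with t + s <= k,
   i.e. x holds source information generated at time s or later.  This property
   persists in time and is passed along every edge.  Starting from s = (k/T - (N-1)) T,
   strong connectivity of each window [cT, (c+1)T) forces at least one new node into
   the fresh set per window, so after N - 1 windows every node is fresh since s,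
   which bounds its index by k - s < N T <= 2 (N-1) T. *)
From Stdlib Require Import Classical.
From mathcomp Require Import all_boot.
From mathcomp Require Import zify.

Set Implicit Arguments. Unset Strict Implicit. Unset Printing Implicit Defensive.

Lemma connect_cut_edge (X : finType) (e : rel X) (p : pred X) x y :
  connect e x y -> p x -> ~~ p y -> exists u v, [/\ e u v, p u & ~~ p v].
Proof.
move/connectP=> [q Hq ->].
elim: q x Hq => [|z q IH] x /=; first by move=> _ ->.
move/andP=> [exz Hq] px npy.
case pz: (p z); first exact: IH Hq pz npy.
by exists x, z; rewrite pz.
Qed.

Lemma increasing_chain_full (X : finType) (S : nat -> {set X}) :
  S 0 != set0 -> (forall c, S c \subset S c.+1) ->
  (forall c, S c != setT -> S c \proper S c.+1) ->
  S #|X|.-1 = setT.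
Proof.
move=> S0 subS properS.
have card_S c : minn c.+1 #|X| <= #|S c|.
  elim: c => [|c IH]; first by move: S0; rewrite -card_gt0; lia.
  have [fullS|/properS/proper_card ltS] := eqVneq (S c) setT.
    have/eqP -> : S c.+1 == setT by rewrite eqEsubset subsetT -fullS subS.
    by rewrite cardsT; lia.
  by move: IH ltS; lia.
apply/eqP; rewrite eqEcard subsetT cardsT /=.
have := card_S #|X|.-1; move: #|S _| => n.
by rewrite -subn1; move: #|X| => m; lia.
Qed.

Section FreshnessTrajectory.

Variables (N : nat) (E : nat -> rel 'I_N) (j : 'I_N) (tau : nat -> 'I_N -> option nat).
Hypothesis trajectory : fresh_trajectory E j tau.

Lemma tau_source k : tau k j = Some 0.
Proof. by case: trajectory. Qed.

Lemma tau_succ_le_self k i ti :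
  tau k i = Some ti -> exists t, tau k.+1 i = Some t /\ t <= ti.+1.
Proof.
case: (eqVneq i j) => [->|nij] Hti; first by exists 0; rewrite tau_source.
case: trajectory => _ _ _ /(_ k i nij); rewrite /fresh_update Hti => -[upd_some upd_none].
case: (classic (exists l t, [/\ nbr E k i l, tau k l = Some t & t < ti])) => [Hex|Hnone].
  by have [u [tu [_ _ lt_tu _ ->]]] := upd_some Hex; exists tu.+1; split; last lia.
by exists ti.+1; rewrite upd_none.
Qed.

Lemma tau_succ_le_nbr k i l tl :
  E k l i -> tau k l = Some tl -> exists t, tau k.+1 i = Some t /\ t <= tl.+1.
Proof.
move=> Ekli Htl.
case: (eqVneq l i) => [<-|nli]; first exact: tau_succ_le_self.
case: (eqVneq i j) => [->|nij]; first by exists 0; rewrite tau_source.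
have nb : nbr E k i l by rewrite /nbr nli Ekli.
case: trajectory => _ _ _ /(_ k i nij); rewrite /fresh_update.
case: (tau k i) => [ti|] [upd_some upd_none].
  case: (classic (exists l t, [/\ nbr E k i l, tau k l = Some t & t < ti])) => [Hex|Hnone].
    have [u [tu [_ _ lt_tu minu ->]]] := upd_some Hex.
    exists tu.+1; split => //; case: (ltnP tl ti) => [/(minu _ _ nb Htl)|]; lia.
  exists ti.+1; rewrite upd_none //; split => //.
  by case: (ltnP tl ti) => // lt; case: Hnone; exists l, tl.
have [u [tu [_ _ minu ->]]] := upd_some (ex_intro _ l (ex_intro _ tl (conj nb Htl))).
by exists tu.+1; split; last by have := minu l tl nb Htl; lia.
Qed.

Definition fresh_since (s k : nat) (x : 'I_N) : bool :=
  if tau k x is Some t then t + s <= k else false.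

Lemma fresh_since_source s k : s <= k -> fresh_since s k j.
Proof. by rewrite /fresh_since tau_source. Qed.

Lemma fresh_since_succ s k x : fresh_since s k x -> fresh_since s k.+1 x.
Proof.
rewrite /fresh_since; case Htx: (tau k x) => [tx|] // fresh.
by have [t [-> le_t]] := tau_succ_le_self Htx; lia.
Qed.

Lemma fresh_since_mono s k k' x : k <= k' -> fresh_since s k x -> fresh_since s k' x.
Proof.
move/subnK <-; elim: (k' - k) => [|d IH] fresh; first by rewrite add0n.
by rewrite addSn; apply/fresh_since_succ/IH.
Qed.

Lemma fresh_since_edge s k x y :
  E k x y -> fresh_since s k x -> fresh_since s k.+1 y.
Proof.
rewrite /fresh_since => Exy; case Htx: (tau k x) => [tx|] // fresh.
by have [t [-> le_t]] := tau_succ_le_nbr Exy Htx; lia.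
Qed.

Definition fresh_set (s k : nat) : {set 'I_N} := [set x | fresh_since s k x].

Lemma fresh_set_window s a b :
  strongly_connected (union_graph E a b) -> s <= a -> fresh_set s a != setT ->
  fresh_set s a \proper fresh_set s b.
Proof.
move=> conn le_sa notfull.
have [y noty] : exists y, y \notin fresh_set s a.
  apply/existsP; apply: contraR notfull; rewrite negb_exists => /forallP all_in.
  by apply/eqP/setP => x; rewrite in_setT; apply/negPn/all_in.
rewrite inE in noty.
have [u [v [/existsP [[t ltt] /= Euv] uin vout]]] :=
  connect_cut_edge (p := fresh_since s a) (conn j y) (fresh_since_source le_sa) noty.
have le_ab : a + t < b by lia.
have vin : v \in fresh_set s b.
  rewrite inE; apply: (fresh_since_mono le_ab).
  by apply: fresh_since_edge Euv _; apply: fresh_since_mono uin; apply: leq_addr.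
apply/properP; split; last by exists v; rewrite // inE.
by apply/subsetP => x; rewrite !inE; apply: fresh_since_mono; lia.
Qed.

End FreshnessTrajectory.

Theorem lemma5 (N T : nat) (E : nat -> rel 'I_N) :
  jointly_strongly_connected E T ->
  forall (j : 'I_N) (tau : nat -> 'I_N -> option nat),
    fresh_trajectory E j tau ->
    forall (k : nat) (i : 'I_N), (N - 1) * T <= k ->
      exists t, tau k i = Some t /\ t <= 2 * (N - 1) * T.
Proof.
move=> [T_gt0 conn] j tau traj k i le_k.
have [->|nij] := eqVneq i j; first by exists 0; rewrite (tau_source traj).
have N_gt1 : 1 < N.
  apply: contraNT nij; rewrite -leqNgt => N_le1.
  by apply/eqP/val_inj => /=; have := ltn_ord i; have := ltn_ord j; lia.
have kTr := divn_eq k T; have rT := ltn_pmod k T_gt0.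
have le_Nq : N - 1 <= k %/ T by rewrite -ltnS -(ltn_pmul2r T_gt0) mulSn; lia.
set m := k %/ T - (N - 1).
pose S c := fresh_set tau (m * T) ((m + c) * T).
have full : S #|'I_N|.-1 = setT.
  apply: increasing_chain_full => [|c|c notfull].
  - by apply/set0Pn; exists j; rewrite inE (fresh_since_source traj) // leq_pmul2r // leq_addr.
  - by apply/subsetP => x; rewrite !inE; apply: (fresh_since_mono traj); rewrite leq_pmul2r ?addnS.
  - by rewrite /S addnS; apply: (fresh_set_window traj) => //; rewrite leq_pmul2r // leq_addr.
have mT : m * T + (N - 1) * T = k %/ T * T by rewrite -mulnDl subnK.
have le_end : (m + N.-1) * T <= k by rewrite -subn1 mulnDl mT {2}kTr leq_addr.
have : fresh_since tau (m * T) k i.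
  apply: (fresh_since_mono traj le_end).
  by move: (in_setT i); rewrite -full inE card_ord.
rewrite /fresh_since; case: (tau k i) => [t fresh|] //; exists t; split => //.
have : T <= (N - 1) * T by rewrite leq_pmull // subn_gt0.
lia.
Qed.
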